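(* Let $V_{\natural}$ be a finite set of boolean and integer variables, $\varphi=\{\varphi_1,\dots,\varphi_n\}$ a set of predicates over integer variables of $V_{\natural}$, and $\alpha^{\tau}$ and $\gamma$ as in the context. For every concrete transition relation $r^{\natural}$ and every set of abstract states $s^{\sharp}$, $$post[r^{\natural}](\gamma(s^{\sharp}))\subseteq\gamma\big(post[\alpha^{\tau}(r^{\natural})](s^{\sharp})\big).$$
   Context: Sets of concrete states are formulas over $V_{\natural}$, concrete transitions are formulas over $V_{\natural}\cup V_{\natural}'$ (primes denote next-state values). For a transition relation $R$ and set of states $A$, $post[R](A)=\{y\mid x\in A,\ (x,y)\in R\}$. $V(\varphi)$ is the set of variables in $\varphi$; $\varphi_i'$ is the primed version of $\varphi_i$. Fresh booleans $b_i,b_i'$ stand for $\varphi_i,\varphi_i'$; abstract variables $V_{\sharp}=(V_{\natural}\cup\{b_i\})\setminus V(\varphi)$. Concretization of abstract states: $\gamma(s^{\sharp})=s^{\sharp}[\bar\varphi/\bar b]$. With $CS=\bigwedge_{i}\big((\bigwedge_{v\in V(\varphi_i)}v'=v)\implies(b_i'\iff b_i)\big)$, transition abstraction is $\alpha^{\tau}(r^{\natural})=\exists V(\varphi).\exists V(\varphi').\big(r^{\natural}\wedge CS\wedge\bigwedge_i(\varphi_i\iff b_i)\wedge\bigwedge_i(\varphi_i'\iff b_i')\big)$, a formula over $V_{\sharp}\cup V_{\sharp}'$. *)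

From mathcomp Require Import all_boot.
From Stdlib Require Import ZArith.
Set Implicit Arguments.
Unset Strict Implicit.
Unset Printing Implicit Defensive.

Section Abstraction.
Variable V : finType.
Variable isint : V -> bool.

Definition value (v : V) : Type := if isint v then Z else bool.

Definition cstate := forall v : V, value v.

Variable n : nat.
Variable phivars : 'I_n -> {set V}.
Variable phi : 'I_n -> cstate -> bool.

Definition Vphi : {set V} := \bigcup_(i < n) phivars i.

(* abstract states: valuations of V_sharp = (V_nat \ V(phi)) u {b_1..b_n} *)
Record astate := AState {
  aorig : forall v : V, v \notin Vphi -> value v;
  abool : 'I_n -> bool }.

Definition post {S : Type} (R : S -> S -> Prop) (A : S -> Prop) : S -> Prop :=
  fun y => exists x, A x /\ R x y.

Definition incl_states {S : Type} (A B : S -> Prop) : Prop := forall x, A x -> B x.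

(* gamma(s#) = s#[phi/b] : x satisfies it iff the abstract valuation
   (x on V_nat \ V(phi), b_i := phi_i(x)) satisfies s#. *)
Definition abstr_of (x : cstate) : astate :=
  AState (fun v _ => x v) (fun i => phi i x).

Definition gamma (s : astate -> Prop) : cstate -> Prop :=
  fun x => s (abstr_of x).

(* CS, read with unprimed/primed abstract valuation a, a' and concrete x, y *)
Definition CS (x y : cstate) (a a' : astate) : Prop :=
  forall i : 'I_n, (forall v, v \in phivars i -> y v = x v) ->
    (abool a' i = abool a i).

(* alpha^tau(r) = exists V(phi). exists V(phi)'.
     r /\ CS /\ (/\_i phi_i <-> b_i) /\ (/\_i phi_i' <-> b_i') *)
Definition alpha_tau (r : cstate -> cstate -> Prop) : astate -> astate -> Prop :=
  fun a a' => exists x y : cstate,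
    (forall v (h : v \notin Vphi), x v = aorig a h) /\
    (forall v (h : v \notin Vphi), y v = aorig a' h) /\
    r x y /\ CS x y a a' /\
    (forall i, phi i x = abool a i) /\
    (forall i, phi i y = abool a' i).

End Abstraction.

From mathcomp Require Import all_boot.
From Stdlib Require Import ZArith.

(* Abstracting both endpoints of a concrete step r x y gives an abstract step:
   x and y themselves witness the existential quantifiers of alpha_tau, and CS
   holds because a predicate whose variables are unchanged keeps its value.
   Hence every successor of a state of gamma(s) abstracts to a successor of s. *)

Section AbstractTransition.

Variables (V : finType) (isint : V -> bool) (n : nat).
Variables (phivars : 'I_n -> {set V}) (phi : 'I_n -> cstate isint -> bool).

Hypothesis phi_local : forall i (x y : cstate isint),
  (forall v, v \in phivars i -> x v = y v) -> phi i x = phi i y.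

Let abstr := @abstr_of V isint n phivars phi.

Lemma CS_abstr_of (x y : cstate isint) : CS x y (abstr x) (abstr y).
Proof. by move=> i frame_i; apply: phi_local => v /frame_i. Qed.

Lemma alpha_tau_abstr_of (r : cstate isint -> cstate isint -> Prop) x y :
  r x y -> alpha_tau phi r (abstr x) (abstr y).
Proof.
move=> rxy; exists x, y.
by do !split=> //; apply: CS_abstr_of.
Qed.

End AbstractTransition.

Theorem lemma5 (V : finType) (isint : V -> bool) (n : nat)
  (phivars : 'I_n -> {set V}) (phi : 'I_n -> cstate isint -> bool)
  (* each phi_i is a predicate over integer variables *)
  (Hint : forall i v, v \in phivars i -> isint v)
  (* phi_i depends only on its variables V(phi_i) *)
  (Hdep : forall i (x y : cstate isint),
     (forall v, v \in phivars i -> x v = y v) -> phi i x = phi i y)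
  (r : cstate isint -> cstate isint -> Prop)
  (s : @astate V isint n phivars -> Prop) :
  incl_states (post r (@gamma V isint n phivars phi s))
         (@gamma V isint n phivars phi
            (post (@alpha_tau V isint n phivars phi r) s)).
Proof.
move=> y [x [s_abstr_x rxy]].
exists (abstr_of phivars phi x).
by split; last exact: alpha_tau_abstr_of.
Qed.
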